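(* Let $\mathcal{L}$ be an intuitionistic abstract logic. For all $z,a,b\in Expr_{\mathcal{L}}$: $z\le a\to b$ if and only if $z\wedge a\le b$.
   Context: An abstract logic is a triple $\mathcal{L}=(Expr_{\mathcal{L}},Th_{\mathcal{L}},\mathcal{C}_{\mathcal{L}})$ where $Expr_{\mathcal{L}}$ is a set, $Th_{\mathcal{L}}$ a non-empty set of subsets of $Expr_{\mathcal{L}}$ (theories) closed under intersections of non-empty subfamilies, and $\mathcal{C}_{\mathcal{L}}$ a set of operations on $Expr_{\mathcal{L}}$. $\mathcal{L}$ is closed under union of chains if the union of every non-empty chain of theories is a theory. A theory $T$ is prime if $T=\bigcap\mathcal{T}$ with $\mathcal{T}\subseteq Th_{\mathcal{L}}$ non-empty finite implies $T\in\mathcal{T}$; totally prime if this holds for non-empty $\mathcal{T}$ of any size. $PTh_{\mathcal{L}}$, $TPTh_{\mathcal{L}}$ denote these sets. An intuitionistic abstract logic is one closed under union of chains with binary connectives $\vee,\wedge,\to$ and constants $\top,\bot$ such that for all $a,b$ and all $T\in TPTh_{\mathcal{L}}$: $a\vee b\in T$ iff $a\in T$ or $b\in T$; $a\wedge b\in T$ iff $a,b\in T$; $a\to b\in T$ iff for every totally prime $T'\supseteq T$, $a\in T'$ implies $b\in T'$; $\top$ lies in every theory and $\bot$ in none. The order: $a\le b$ iff $S_a\subseteq S_b$, where $S_a=\{P\in PTh_{\mathcal{L}}: a\in P\}$. *)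

From Stdlib Require Import List.

Definition pset (X : Type) := X -> Prop.

Definition bigcap {X : Type} (F : pset (pset X)) : pset X :=
  fun x => forall T, F T -> T x.

Definition bigcup {X : Type} (F : pset (pset X)) : pset X :=
  fun x => exists T, F T /\ T x.

Definition subset {X : Type} (A B : pset X) : Prop := forall x, A x -> B x.

Definition nonempty {X : Type} (F : pset X) : Prop := exists T, F T.

Definition finite_fam {X : Type} (F : pset X) : Prop :=
  exists l : list X, forall T, F T <-> In T l.

Record abstract_logic := AbstractLogic {
  Expr : Type;
  Th : pset (pset Expr);
  C : pset { n : nat & (list Expr -> Expr) };
  Th_nonempty : nonempty Th;
  Th_cap : forall F : pset (pset Expr),
      subset F Th -> nonempty F -> Th (bigcap F)
}.

Definition is_chain {X : Type} (F : pset (pset X)) : Prop :=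
  forall A B, F A -> F B -> subset A B \/ subset B A.

Definition closed_under_union_of_chains (L : abstract_logic) : Prop :=
  forall F : pset (pset (Expr L)),
    subset F (Th L) -> nonempty F -> is_chain F -> Th L (bigcup F).

Definition prime_th (L : abstract_logic) (T : pset (Expr L)) : Prop :=
  Th L T /\
  forall F : pset (pset (Expr L)),
    subset F (Th L) -> nonempty F -> finite_fam F -> T = bigcap F -> F T.

Definition totally_prime_th (L : abstract_logic) (T : pset (Expr L)) : Prop :=
  Th L T /\
  forall F : pset (pset (Expr L)),
    subset F (Th L) -> nonempty F -> T = bigcap F -> F T.

Definition S_ (L : abstract_logic) (a : Expr L) : pset (pset (Expr L)) :=
  fun P => prime_th L P /\ P a.

Definition le_L (L : abstract_logic) (a b : Expr L) : Prop :=
  subset (S_ L a) (S_ L b).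

Record intuitionistic_logic (L : abstract_logic) := IntLogic {
  il_or : Expr L -> Expr L -> Expr L;
  il_and : Expr L -> Expr L -> Expr L;
  il_imp : Expr L -> Expr L -> Expr L;
  il_top : Expr L;
  il_bot : Expr L;
  il_chains : closed_under_union_of_chains L;
  il_or_spec : forall a b T, totally_prime_th L T ->
      (T (il_or a b) <-> T a \/ T b);
  il_and_spec : forall a b T, totally_prime_th L T ->
      (T (il_and a b) <-> T a /\ T b);
  il_imp_spec : forall a b T, totally_prime_th L T ->
      (T (il_imp a b) <->
       forall T', totally_prime_th L T' -> subset T T' -> T' a -> T' b);
  il_top_spec : forall T, Th L T -> T il_top;
  il_bot_spec : forall T, Th L T -> ~ T il_bot
}.

(** A theory avoiding an expression [x] extends, by Zorn's lemma and closure
    under unions of chains, to a theory maximal among those avoiding [x], and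
    such a maximal theory is totally prime: if it is the intersection of a
    family, some member also avoids [x], and maximality forces that member to
    be the theory itself.  Hence every theory is the intersection of its totally
    prime extensions, so [a <= b] holds exactly when every totally prime theory
    containing [a] contains [b].  The equivalence then follows by unfolding the
    clauses for [/\] and [->] on totally prime theories. *)

From Pilot Require Import Defs.
From Stdlib Require Import Classical.
From mathcomp Require Import all_boot boolp classical_sets.

Set Implicit Arguments.
Unset Strict Implicit.

Lemma exists_maximal_above (X : Type) (P : pset (pset X)) (S0 : pset X) :
  (forall F, Defs.subset F P -> Defs.nonempty F -> is_chain F -> P (Defs.bigcup F)) ->
  P S0 ->
  exists M, [/\ P M, Defs.subset S0 M &
                forall S, P S -> Defs.subset M S -> Defs.subset S M].
Proof.
move=> chainP PS0.
pose Above := {S : pset X | P S /\ Defs.subset S0 S}.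
pose R (S T : Above) := `[< Defs.subset (sval S) (sval T) >].
have [| | |M maxM] := @ZL_preorder Above (exist _ S0 (conj PS0 (fun _ h => h))) R.
- by move=> S; apply/asboolP.
- by move=> S T U /asboolP sST /asboolP sTU; apply/asboolP => y /sST /sTU.
- move=> A chainA.
  have [[S1 AS1]|A0] := pselect (exists S, A S); last first.
    by exists (exist _ S0 (conj PS0 (fun _ h => h))) => S AS; case: A0; exists S.
  pose F S := exists2 T : Above, A T & sval T = S.
  have PF : P (Defs.bigcup F).
    apply: chainP; first by move=> _ [T _ <-]; case: (svalP T).
    - by exists (sval S1); exists S1.
    - move=> _ _ [T1 AT1 <-] [T2 AT2 <-].
      by case: (chainA _ _ AT1 AT2) => /asboolP; [left | right].
  have S0F : Defs.subset S0 (Defs.bigcup F).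
    move=> y S0y; exists (sval S1); split; first by exists S1.
    by case: (svalP S1) => _; apply.
  exists (exist _ (Defs.bigcup F) (conj PF S0F)) => T AT; apply/asboolP => y Ty.
  by exists (sval T); split => //; exists T.
case: (svalP M) => PM S0M; exists (sval M); split => // S PS MS.
have S0S : Defs.subset S0 S by move=> y /S0M /MS.
by have /asboolP := maxM (exist _ S (conj PS S0S)) (asboolT MS).
Qed.

Section TotallyPrimeTheories.
Variable L : abstract_logic.
Hypothesis chains : closed_under_union_of_chains L.

Lemma totally_prime_prime T : totally_prime_th L T -> prime_th L T.
Proof. by case=> ThT tpT; split=> // F FTh F0 _; apply: tpT. Qed.

Lemma maximal_avoiding_totally_prime (T : pset (Expr L)) (x : Expr L) :
  Th L T -> ~ T x ->
  (forall S, Th L S -> ~ S x -> Defs.subset T S -> Defs.subset S T) ->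
  totally_prime_th L T.
Proof.
move=> ThT Tx maxT; split=> // F FTh _ defT.
have [S FS Sx] : exists2 S, F S & ~ S x.
  apply: NNPP => noS; apply: Tx; rewrite defT => S FS.
  by apply: NNPP => Sx; apply: noS; exists S.
have TS : Defs.subset T S by rewrite defT => y; apply.
suff -> : T = S by [].
by rewrite eqEsubset; split; [exact: TS | exact: maxT (FTh S FS) Sx TS].
Qed.

Lemma totally_prime_extension (P : pset (Expr L)) (x : Expr L) :
  Th L P -> ~ P x ->
  exists T, [/\ totally_prime_th L T, Defs.subset P T & ~ T x].
Proof.
move=> ThP Px.
have [|T [[ThT Tx] PT maxT]] :=
  @exists_maximal_above _ (fun S => Th L S /\ ~ S x) P _ (conj ThP Px).
  move=> F FAv F0 chainF; split.
    by apply: chains => // S /FAv [].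
  by case=> S [/FAv [_ Sx] /Sx].
exists T; split; [|exact: PT|exact: Tx].
apply: (maximal_avoiding_totally_prime ThT Tx) => S ThS Sx.
exact: maxT.
Qed.

Lemma le_L_totally_prime a b :
  le_L L a b <-> forall T, totally_prime_th L T -> T a -> T b.
Proof.
split=> [le_ab T tpT Ta | tp_ab P [primeP Pa]].
  by have [] := le_ab T (conj (totally_prime_prime tpT) Ta).
split; first exact: primeP.
apply: NNPP => Pb.
have [T [tpT PT Tb]] := totally_prime_extension (proj1 primeP) Pb.
exact: Tb (tp_ab T tpT (PT a Pa)).
Qed.

End TotallyPrimeTheories.

Theorem lemma4p2 (L : abstract_logic) (I : intuitionistic_logic L)
  (z a b : Expr L) :
  le_L L z (il_imp L I a b) <-> le_L L (il_and L I z a) b.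
Proof.
rewrite !(le_L_totally_prime (il_chains L I)); split.
- move=> le_imp T tpT /(il_and_spec L I _ _ _ tpT) [Tz Ta].
  have /(il_imp_spec L I _ _ _ tpT) imp_ab := le_imp T tpT Tz.
  exact: imp_ab T tpT (fun _ h => h) Ta.
- move=> le_and T tpT Tz; apply/(il_imp_spec L I _ _ _ tpT) => T' tpT' TT' T'a.
  apply: (le_and T' tpT'); apply/(il_and_spec L I _ _ _ tpT').
  by split; [exact: TT' | exact: T'a].
Qed.
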